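(* There is an absolute constant $C\ge1$ such that for every $n\ge3$ and every $\vec a=a_1\cdots a_n\in\mathbb N^n$ (writing $X\sim Y$ for $C^{-1}Y\le X\le CY$): (1) $\#\Xi(\mathbf1,\vec a)\sim q_n(\vec a)/a_1$; (2) $\#\Xi(\mathbf2,\vec a)\sim q_n(\vec a)$; (3) $\#\Xi(\mathbf3,\vec a)\sim q_n(\vec a)$ if $a_1\ge2$; (4) $\#\Xi(\mathbf3,\vec a)\sim q_n(\vec a)/a_2$ if $a_1=1$; (5) $\#\Xi(\mathbf t,\vec a,\mathbf2)+\#\Xi(\mathbf t,\vec a,\mathbf3)\sim\#\Xi(\mathbf t,\vec a)$ for every $\mathbf t\in\{\mathbf1,\mathbf2,\mathbf3\}$; (6) $\#\Xi(\mathbf2,\vec a,\mathbf1)\sim q_n(\vec a)$.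
   Context: $q_n(\vec a)$ is defined by $q_{-1}=0$, $q_0=1$, $q_{k+1}=a_{k+1}q_k+q_{k-1}$. For $m\ge1$ let $\mathcal A_m=\{(\mathbf1,k)_m:1\le k\le m+1\}\cup\{(\mathbf2,1)_m\}\cup\{(\mathbf3,k)_m:1\le k\le m\}$, type $\mathbf t_{(\mathbf t,k)_m}=\mathbf t$. For $\mathbf t\in\{\mathbf1,\mathbf2,\mathbf3\}$, $\hat e\in\mathcal A_m$: $\mathbf t\to\hat e$ iff $(\mathbf t,\hat e)$ is $(\mathbf1,(\mathbf2,1)_m)$, $(\mathbf2,(\mathbf1,k)_m)$ with $k\le m+1$, $(\mathbf2,(\mathbf3,k)_m)$ with $k\le m$, $(\mathbf3,(\mathbf1,k)_m)$ with $k\le m$, or $(\mathbf3,(\mathbf3,k)_m)$ with $k\le m-1$; $e\to\hat e$ iff $\mathbf t_e\to\hat e$. $\Xi(\mathbf t,\vec a)$ is the set of words $w_1\cdots w_n\in\prod_{j=1}^n\mathcal A_{a_j}$ with $\mathbf t\to w_1$ and $w_j\to w_{j+1}$ ($1\le j<n$); $\Xi(\mathbf t,\vec a,\mathbf t')=\{w\in\Xi(\mathbf t,\vec a):\mathbf t_{w_n}=\mathbf t'\}$. *)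

From mathcomp Require Import all_boot all_order all_algebra.
Set Implicit Arguments. Unset Strict Implicit. Unset Printing Implicit Defensive.
Import Order.TTheory GRing.Theory Num.Theory.

Inductive typ := T1 | T2 | T3.

Definition typ_eqb (s t : typ) : bool :=
  match s, t with T1, T1 | T2, T2 | T3, T3 => true | _, _ => false end.

(* A letter (t,k)_m is represented by the pair (t, k); the index m is
   determined by the position in the word (w_j ranges over A_{a_j}). *)
Definition letter := (typ * nat)%type.

(* Explicit enumeration (without repetition) of the alphabet A_m. *)
Definition alph (m : nat) : seq letter :=
  [seq (T1, k) | k <- iota 1 m.+1] ++ [:: (T2, 1)] ++ [seq (T3, k) | k <- iota 1 m].

Definition arrow (t : typ) (m : nat) (e : letter) : bool :=
  match t, e with
  | T1, (T2, k) => k == 1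
  | T2, (T1, k) => k <= m.+1
  | T2, (T3, k) => k <= m
  | T3, (T1, k) => k <= m
  | T3, (T3, k) => k <= m.-1
  | _, _ => false
  end.

Definition words (a : seq nat) : seq (seq letter) :=
  foldr (fun m ws => [seq e :: w | e <- alph m, w <- ws]) [:: [::]] a.

Fixpoint chain (t : typ) (a : seq nat) (w : seq letter) : bool :=
  match a, w with
  | m :: a', e :: w' => arrow t m e && chain e.1 a' w'
  | _, _ => true
  end.

Definition Xi (t : typ) (a : seq nat) : seq (seq letter) :=
  [seq w <- words a | chain t a w].

Definition Xi3 (t : typ) (a : seq nat) (t' : typ) : seq (seq letter) :=
  [seq w <- Xi t a | typ_eqb (last (T1, 0) w).1 t'].

(* q_n(a): q_{-1} = 0, q_0 = 1, q_{k+1} = a_{k+1} q_k + q_{k-1}. *)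
Definition qn (a : seq nat) : nat :=
  (foldl (fun pq x => (pq.2, x * pq.2 + pq.1)) (0, 1) a).2.

Definition sim (C X Y : rat) : Prop := (C^-1 * Y <= X /\ X <= C * Y)%R.

(* Sorting the words of Xi(t, a) by the type of their last letter turns #Xi into a
   product of 3x3 transfer matrices, one per letter a_j (see [arrow_sum]).
   Peeling off the first letter, the triple (#Xi(1,b), #Xi(2,b), #Xi(3,b)) satisfies a
   recurrence that agrees, up to a factor 3, with the continuant recurrence
   q(x b) = x q(b) + q(behead b); this gives (1)-(4).  Peeling off the last letter
   instead shows that among words of Xi(t, a), those ending in type 3 never outnumber
   those ending in type 1, and hence that the words ending in types 2 or 3, and
   (for t = 2) those ending in type 1, are a fixed proportion of all words: (5), (6). *)

From mathcomp Require Import all_boot all_order all_algebra.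
From mathcomp Require Import ring zify.
Import Order.TTheory GRing.Theory Num.Theory.

Set Implicit Arguments.
Unset Strict Implicit.
Unset Printing Implicit Defensive.

Definition arrow_sum (t : typ) (m : nat) (g : typ -> nat) : nat :=
  match t with
  | T1 => g T2
  | T2 => m.+1 * g T1 + m * g T3
  | T3 => m * g T1 + m.-1 * g T3
  end.

Lemma arrow_sum_ext t m (f g : typ -> nat) : f =1 g -> arrow_sum t m f = arrow_sum t m g.
Proof. by move=> fg; case: t => /=; rewrite !fg. Qed.

Lemma sumn_letters_leq (f : letter -> nat) s c X n :
  (forall k, 0 < k -> f (s, k) = (k <= c) * X) ->
  sumn [seq f e | e <- [seq (s, k) | k <- iota 1 n]] = minn n c * X.
Proof.
move=> fE; elim: n => [|n IHn]; first by rewrite min0n.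
rewrite -[n.+1]addn1 iotaD !map_cat sumn_cat IHn /= fE // add1n addn0 -mulnDl.
by congr (_ * _); case: ltnP; lia.
Qed.

Lemma sumn_arrow t m (g : typ -> nat) :
  sumn [seq arrow t m e * g e.1 | e <- alph m] = arrow_sum t m g.
Proof.
rewrite /alph !map_cat !sumn_cat.
case: t.
- rewrite (sumn_letters_leq (c := 0) (X := g T1))
          ?(sumn_letters_leq (c := 0) (X := g T3)) => [|[]|[]] //=.
  by rewrite !minn0 !mul0n mul1n !addn0 add0n.
- rewrite (sumn_letters_leq (c := m.+1) (X := g T1))
          ?(sumn_letters_leq (c := m) (X := g T3)) //=.
  by rewrite !minnn mul0n !addn0.
- rewrite (sumn_letters_leq (c := m) (X := g T1))
          ?(sumn_letters_leq (c := m.-1) (X := g T3)) //=.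
  by rewrite (minn_idPr (leqnSn m)) (minn_idPr (leq_pred m)) mul0n !addn0.
Qed.

Fixpoint walks (t : typ) (a : seq nat) (f : typ -> nat) : nat :=
  if a is m :: a' then arrow_sum t m (fun s => walks s a' f) else f t.

Definition ends (s : typ) : typ -> nat := fun r => typ_eqb r s.

Lemma last_fst (e : letter) w : (last e w).1 = (last (e.1, 0) w).1.
Proof. by case/lastP: w => // w x; rewrite !last_rcons. Qed.

Lemma words_cons m a :
  words (m :: a) = flatten [seq [seq e :: w | w <- words a] | e <- alph m].
Proof. by []. Qed.

Lemma count_chain_cons (d : letter) (P : pred typ) t m a :
  count (fun w => chain t (m :: a) w && P (last d w).1) (words (m :: a)) =
  arrow_sum t m (fun s => count (fun w => chain s a w && P (last (s, 0) w).1) (words a)).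
Proof.
rewrite -sumn_arrow words_cons count_flatten -map_comp; congr sumn.
apply: eq_map => e /=; rewrite count_map.
transitivity
  (count (fun w => arrow t m e && (chain e.1 a w && P (last (e.1, 0) w).1)) (words a)).
  by apply: eq_count => w /=; rewrite last_fst andbA.
by case: (arrow t m e); rewrite ?mul1n ?mul0n //; elim: (words a).
Qed.

Lemma count_chain (P : pred typ) t a :
  count (fun w => chain t a w && P (last (t, 0) w).1) (words a) = walks t a (fun s => P s).
Proof.
elim: a t => [|m a IHa] t; first by rewrite /= addn0.
by rewrite count_chain_cons; apply: arrow_sum_ext => s; apply: IHa.
Qed.

Lemma size_Xi t a : size (Xi t a) = walks t a (fun=> 1).
Proof.
by rewrite size_filter -(count_chain predT); apply: eq_count => w; rewrite andbT.
Qed.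

(* For a = [::], [Xi3] classifies the empty word by its default letter (T1, 0), not by t. *)
Lemma size_Xi3 t a s : 0 < size a -> size (Xi3 t a s) = walks t a (ends s).
Proof.
case: a => // m a _; rewrite size_filter count_filter.
rewrite (eq_count (a2 := fun w => chain t (m :: a) w && typ_eqb (last (T1, 0) w).1 s)).
  rewrite (count_chain_cons _ (fun r => typ_eqb r s)).
  by apply: arrow_sum_ext => r; apply: count_chain.
by move=> w; rewrite /= andbC.
Qed.

Lemma size_Xi_nil t : size (Xi t [::]) = 1.
Proof. by []. Qed.

Lemma size_Xi_cons t m a : size (Xi t (m :: a)) = arrow_sum t m (fun s => size (Xi s a)).
Proof. by rewrite size_Xi; apply: arrow_sum_ext => s; rewrite size_Xi. Qed.

Lemma walks_cat t p q f : walks t (p ++ q) f = walks t p (fun s => walks s q f).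
Proof. by elim: p t => //= m p IHp t; apply: arrow_sum_ext. Qed.

Lemma walks_ends t a f :
  walks t a f =
  walks t a (ends T1) * f T1 + walks t a (ends T2) * f T2 + walks t a (ends T3) * f T3.
Proof.
elim: a t => [|m a IHa] t; first by case: t; rewrite /= ?mul1n ?mul0n ?addn0.
by rewrite /= (arrow_sum_ext _ _ IHa); case: t => /=; ring.
Qed.

Lemma walks_rconsE t p m f :
  walks t (rcons p m) f = walks t p (ends T1) * arrow_sum T1 m f +
    walks t p (ends T2) * arrow_sum T2 m f + walks t p (ends T3) * arrow_sum T3 m f.
Proof. by rewrite -cats1 walks_cat walks_ends. Qed.

Definition qstep (pq : nat * nat) (x : nat) : nat * nat := (pq.2, x * pq.2 + pq.1).

(* [qn] runs the continuant recurrence forwards; linearity of the fold in its initial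
   pair yields the backward recurrence [qn_cons2] needed to induct on the first letter. *)
Lemma foldl_qstep_lin a p0 p1 :
  foldl qstep (p0, p1) a =
  (p0 * (foldl qstep (1, 0) a).1 + p1 * (foldl qstep (0, 1) a).1,
   p0 * (foldl qstep (1, 0) a).2 + p1 * (foldl qstep (0, 1) a).2).
Proof.
elim: a p0 p1 => [|x a IHa] p0 p1 /=; first by rewrite !muln0 !muln1 !addn0 add0n.
rewrite /qstep /= IHa (IHa 0 (x * 0 + 1)) (IHa 1 (x * 1 + 0)) /=.
by congr pair; ring.
Qed.

Lemma qn_foldl a : qn a = (foldl qstep (0, 1) a).2.
Proof. by []. Qed.

Lemma qn_nil : qn [::] = 1. Proof. by []. Qed.

Lemma qn_seq1 x : qn [:: x] = x. Proof. by rewrite /qn /= muln1 addn0. Qed.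

Lemma qn_cons2 x y c : qn [:: x, y & c] = x * qn (y :: c) + qn c.
Proof.
rewrite !qn_foldl /= ![qstep _ _]/qstep /=.
rewrite (foldl_qstep_lin c (x * 1 + 0)) (foldl_qstep_lin c 1 (y * 1 + 0)) /=.
ring.
Qed.

Lemma qn_behead_le a : all (fun x => 0 < x) a -> qn (behead a) <= qn a.
Proof.
case: a => [|x [|y c]] //= /andP[x_gt0 _]; first by rewrite qn_seq1.
by rewrite qn_cons2 (leq_trans (leq_pmull _ x_gt0)) ?leq_addr.
Qed.

Lemma size_Xi_bounds b : all (fun x => 0 < x) b -> 0 < size b ->
  [/\ qn b <= size (Xi T2 b) <= 3 * qn b,
      qn b <= size (Xi T1 b) + size (Xi T3 b) <= 3 * qn b &
      qn (behead b) <= size (Xi T1 b) <= 3 * qn (behead b)].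
Proof.
elim: b => // -[//|k] c IHc /andP[_ c_pos] _; rewrite !size_Xi_cons /=.
case: c IHc c_pos => [|y c] IHc c_pos.
  by rewrite qn_seq1 qn_nil !size_Xi_nil; split; lia.
have [/andP[W_ge W_le] /andP[UV_ge UV_le] /andP[U_ge U_le]] := IHc c_pos isT.
rewrite qn_cons2 /=.
set U := size (Xi T1 _) in U_ge U_le UV_ge UV_le *; set V := size (Xi T3 _) in UV_ge UV_le *.
set Q := qn (y :: c) in W_ge W_le UV_ge UV_le *.
have kUV_ge : k * Q <= k * U + k * V by rewrite -mulnDr leq_mul2l UV_ge orbT.
have kUV_le : k * U + k * V <= 3 * (k * Q) by rewrite mulnCA -mulnDr leq_mul2l UV_le orbT.
rewrite /= in U_ge U_le; rewrite !mulSn; split; lia.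
Qed.

Lemma sim_nat C X Y : 0 < C -> Y <= C * X -> X <= C * Y -> sim C%:R X%:R Y%:R.
Proof.
move=> C_gt0 YX XY; split; last by rewrite -natrM ler_nat.
by rewrite mulrC ler_pdivrMr ?ltr0n // -natrM ler_nat mulnC.
Qed.

Lemma sim_nat_div C X Y d : 0 < C -> 0 < d ->
  Y <= C * (X * d) -> X * d <= C * Y -> sim C%:R X%:R (Y%:R / d%:R).
Proof.
move=> C_gt0 d_gt0 YXd XdY; split.
  by rewrite mulrC !ler_pdivrMr ?ltr0n // -!natrM ler_nat mulnAC mulnC.
by rewrite mulrA ler_pdivlMr ?ltr0n // -!natrM ler_nat.
Qed.

Lemma sim_size_Xi_T1 a : 2 <= size a -> all (fun x => 0 < x) a ->
  sim 3%:R (size (Xi T1 a))%:R ((qn a)%:R / (nth 0 a 0)%:R).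
Proof.
case: a => [|x [|y c]] // _ a_pos.
have [_ _ /andP[U_ge U_le]] := size_Xi_bounds a_pos isT.
have /andP[x_gt0 b_pos] : (0 < x) && all (fun x => 0 < x) (y :: c) by [].
have Q'_le := qn_behead_le b_pos.
rewrite qn_cons2 /= in U_ge U_le Q'_le *.
apply: sim_nat_div => //; nia.
Qed.

Lemma sim_size_Xi_T2 a : 0 < size a -> all (fun x => 0 < x) a ->
  sim 3%:R (size (Xi T2 a))%:R (qn a)%:R.
Proof.
move=> a_gt0 a_pos; have [/andP[W_ge W_le] _ _] := size_Xi_bounds a_pos a_gt0.
by apply: sim_nat => //; lia.
Qed.

Lemma sim_size_Xi_T3_head_ge2 a : 2 <= size a -> all (fun x => 0 < x) a -> 2 <= nth 0 a 0 ->
  sim 3%:R (size (Xi T3 a))%:R (qn a)%:R.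
Proof.
case: a => [|x [|y c]] // _ a_pos /= x_ge2.
have /andP[x_gt0 b_pos] : (0 < x) && all (fun x => 0 < x) (y :: c) by [].
have [_ /andP[UV_ge UV_le] _] := size_Xi_bounds b_pos isT.
have Q'_le := qn_behead_le b_pos.
rewrite size_Xi_cons qn_cons2 /= in Q'_le *.
apply: sim_nat => //; nia.
Qed.

Lemma sim_size_Xi_T3_head1 a : 3 <= size a -> all (fun x => 0 < x) a -> nth 0 a 0 = 1 ->
  sim 3%:R (size (Xi T3 a))%:R ((qn a)%:R / (nth 0 a 1)%:R).
Proof.
case: a => [|x [|y [|z c]]] // _ a_pos /= x1; subst x.
have /andP[_ b_pos] : (0 < 1) && all (fun x => 0 < x) [:: y, z & c] by [].
have /andP[y_gt0 c_pos] : (0 < y) && all (fun x => 0 < x) (z :: c) by [].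
have [_ _ /andP[U_ge U_le]] := size_Xi_bounds b_pos isT.
have Q''_le := qn_behead_le c_pos.
rewrite /= in U_ge U_le Q''_le; rewrite size_Xi_cons !qn_cons2 /= mul1n mul0n addn0.
apply: sim_nat_div => //; nia.
Qed.

Lemma walks_one t a :
  walks t a (fun=> 1) = walks t a (ends T1) + walks t a (ends T2) + walks t a (ends T3).
Proof. by rewrite walks_ends !muln1. Qed.

Lemma walks_rcons_ends3_le_ends1 t p m :
  walks t (rcons p m) (ends T3) <= walks t (rcons p m) (ends T1).
Proof.
rewrite !walks_rconsE /= !muln0 !muln1 !addn0 !add0n.
exact: leq_add (leq_mul (leqnn _) (leqnSn m)) (leq_mul (leqnn _) (leq_pred m)).
Qed.

Lemma walks_rcons_ends1_le t p m :
  walks t p (ends T3) <= walks t p (ends T1) -> 0 < m ->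
  walks t (rcons p m) (ends T1) <=
  2 * (walks t (rcons p m) (ends T2) + walks t (rcons p m) (ends T3)).
Proof.
move=> ends3_le; case: m => // k _.
rewrite !walks_rconsE /= !muln0 !muln1 !addn0 !add0n !mulnS; lia.
Qed.

Lemma walks_rcons_le_ends23 t p m :
  walks t p (ends T3) <= walks t p (ends T1) -> 0 < m ->
  walks t (rcons p m) (fun=> 1) <=
  3 * (walks t (rcons p m) (ends T2) + walks t (rcons p m) (ends T3)).
Proof.
move=> ends3_le; case: m => // k _.
rewrite walks_one !walks_rconsE /= !muln0 !muln1 !addn0 !add0n !mulnS; lia.
Qed.

Lemma walks_rcons_le_ends1 t p m :
  walks t p (ends T1) <= 2 * (walks t p (ends T2) + walks t p (ends T3)) -> 0 < m ->
  walks t (rcons p m) (fun=> 1) <= 3 * walks t (rcons p m) (ends T1).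
Proof.
move=> ends1_le; case: m => // k _.
rewrite walks_one !walks_rconsE /= !muln0 !muln1 !addn0 !add0n !mulnS; lia.
Qed.

Lemma sim_size_Xi3_ends23 t a : 2 <= size a -> all (fun x => 0 < x) a ->
  sim 3%:R (size (Xi3 t a T2) + size (Xi3 t a T3))%:R (size (Xi t a))%:R.
Proof.
case/lastP: a => [|q m] //; case/lastP: q => [|p m'] // _.
rewrite all_rcons => /andP[m_gt0 _].
rewrite size_Xi !size_Xi3 ?size_rcons //.
have total_le := walks_rcons_le_ends23 (walks_rcons_ends3_le_ends1 t p m') m_gt0.
apply: sim_nat => //; rewrite walks_one in total_le *; lia.
Qed.

Lemma sim_size_Xi3_T2_ends1 a : 3 <= size a -> all (fun x => 0 < x) a ->
  sim 3%:R (size (Xi3 T2 a T1))%:R (qn a)%:R.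
Proof.
move=> a_ge3 a_pos; have [/andP[W_ge W_le] _ _] := size_Xi_bounds a_pos (ltnW (ltnW a_ge3)).
rewrite size_Xi in W_ge W_le; move: a_ge3 a_pos W_ge W_le.
case/lastP: a => [|q m] //; case/lastP: q => [|q m'] //; case/lastP: q => [|p m''] // _.
rewrite !all_rcons => /and3P[m_gt0 m'_gt0 _] W_ge W_le.
have ends1_le := walks_rcons_ends1_le (walks_rcons_ends3_le_ends1 T2 p m'') m'_gt0.
have total_le := walks_rcons_le_ends1 ends1_le m_gt0.
rewrite size_Xi3 ?size_rcons //.
apply: sim_nat => //; rewrite walks_one in W_ge W_le total_le *; lia.
Qed.

Theorem lemma4p5 :
  exists C : rat, (1 <= C)%R /\
  forall a : seq nat, 3 <= size a -> all (fun x => 0 < x) a ->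
  (* (1) *) sim C (size (Xi T1 a))%:R ((qn a)%:R / (nth 0 a 0)%:R) /\
  (* (2) *) sim C (size (Xi T2 a))%:R (qn a)%:R /\
  (* (3) *) (2 <= nth 0 a 0 -> sim C (size (Xi T3 a))%:R (qn a)%:R) /\
  (* (4) *) (nth 0 a 0 = 1 -> sim C (size (Xi T3 a))%:R ((qn a)%:R / (nth 0 a 1)%:R)) /\
  (* (5) *) (forall t : typ,
               sim C (size (Xi3 t a T2) + size (Xi3 t a T3))%:R (size (Xi t a))%:R) /\
  (* (6) *) sim C (size (Xi3 T2 a T1))%:R (qn a)%:R.
Proof.
exists 3%:R%R; split; first by rewrite ler1n.
move=> a a_ge3 a_pos; have a_ge2 := ltnW a_ge3; have a_gt0 := ltnW a_ge2.
split; first exact: sim_size_Xi_T1.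
split; first exact: sim_size_Xi_T2.
split; first exact: sim_size_Xi_T3_head_ge2.
split; first exact: sim_size_Xi_T3_head1.
split; first by move=> t; apply: sim_size_Xi3_ends23.
exact: sim_size_Xi3_T2_ends1.
Qed.
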